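(* Let $N\ge1$, $V=\{1,\dots,N\}$, $A$ an $N\times N$ row-stochastic matrix, and $\sigma_1,\sigma_2,\dots$ random variables with values in $2^V$. Consider $x(k+1)=A_{\sigma_k}x(k)$, $k\ge1$, with deterministic $x(1)\in\mathbb R^N$. Suppose: (a) $\mathcal G(A)$ is rooted and some root $r\in\mathbbm r(A)$ has a self-loop, i.e. $a_{rr}>0$. (b) There exists $\alpha>0$ such that whenever $\mathbb P(\sigma_k\mid\sigma_{k-1},\dots,\sigma_1)\neq0$, it is $\ge\alpha$. (c) There exists $q>0$ such that for every $k\ge1$ and every given value of $(\sigma_{k-1},\dots,\sigma_1)$, $\bigcup_{w=0}^{q-1}\bigcup_{\sigma\in\mathscr I_{\sigma_{(k-1):1}}(w)}\sigma=V$, where $\mathscr I_{\sigma_{(k-1):1}}(w)=\{\sigma:\mathbb P(\sigma_{k+w}=\sigma\mid\sigma_{k-1},\dots,\sigma_1)\neq0\}$. Then the iteration reaches consensus almost surely.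
   Context: $\mathcal G(A)$ is the directed graph on $V$ with an edge $(j,i)$ iff $a_{ij}>0$; it is rooted if some node $r$ has a directed path to every other node, and $\mathbbm r(A)$ is the set of such roots. For $\sigma\subseteq V$, $A_\sigma$ is the matrix whose $j$-th row equals the $j$-th row of $A$ if $j\in\sigma$ and $e_j^T$ otherwise. For $k=1$ conditional probabilities given the empty past are unconditional. The iteration reaches consensus almost surely if for every $\varepsilon>0$ and every $x(1)$, $\lim_{k\to\infty}\mathbb P\big(\sum_{j=1}^N (x_j(k)-\frac1N\sum_{i=1}^N x_i(k))^2\ge\varepsilon\big)=0$. *)

From HB Require Import structures.
From mathcomp Require Import all_boot all_order all_algebra.
From mathcomp Require Import all_classical all_reals all_analysis.
Set Implicit Arguments. Unset Strict Implicit. Unset Printing Implicit Defensive.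
Import Order.TTheory GRing.Theory Num.Theory.
Local Open Scope classical_set_scope.
Local Open Scope ring_scope.

Definition row_stochastic (R : realType) (N : nat) (A : 'M[R]_N) : Prop :=
  (forall i j, 0 <= A i j) /\ (forall i, \sum_(j < N) A i j = 1).

Definition graph_rel (R : realType) (N : nat) (A : 'M[R]_N) : rel 'I_N :=
  fun j i => 0 < A i j.

Definition is_root (R : realType) (N : nat) (A : 'M[R]_N) (r : 'I_N) : Prop :=
  forall i, connect (graph_rel A) r i.

Definition rooted (R : realType) (N : nat) (A : 'M[R]_N) : Prop :=
  exists r, is_root A r.

Definition Asub (R : realType) (N : nat) (A : 'M[R]_N) (s : {set 'I_N}) : 'M[R]_N :=
  \matrix_(j, l) (if j \in s then A j l else (j == l)%:R).

(* traj A sig x1 m w = x(m+1) at outcome w:  x(1) = x1, x(k+1) = A_{sig k} x(k) *)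
Fixpoint traj (R : realType) (N : nat) (A : 'M[R]_N) (T : Type)
  (sig : nat -> T -> {set 'I_N}) (x1 : 'cV[R]_N) (m : nat) (w : T) : 'cV[R]_N :=
  match m with
  | 0 => x1
  | m'.+1 => Asub A (sig m w) *m traj A sig x1 m' w
  end.

Definition disagreement (R : realType) (N : nat) (x : 'cV[R]_N) : R :=
  \sum_(j < N) (x j 0 - N%:R^-1 * \sum_(i < N) x i 0) ^+ 2.

(* event {sig_i = h i for 1 <= i < k}, i.e. given value h of (sig_{k-1},...,sig_1) *)
Definition hist_event (T : Type) (N : nat) (sig : nat -> T -> {set 'I_N})
  (k : nat) (h : nat -> {set 'I_N}) : set T :=
  [set w | forall i, (0 < i < k)%N -> sig i w = h i].

Definition cprob (d : measure_display) (T : measurableType d) (R : realType)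
  (P : probability T R) (E B : set T) : R :=
  fine (P (E `&` B)) / fine (P B).

From HB Require Import structures.
From mathcomp Require Import all_boot all_order all_algebra.
From mathcomp Require Import all_classical all_reals all_analysis.
From mathcomp Require Import ring lra.
Import Order.TTheory GRing.Theory Num.Theory.
Local Open Scope classical_set_scope.
Local Open Scope ring_scope.
Set Implicit Arguments. Unset Strict Implicit. Unset Printing Implicit Defensive.

(* Let a be the smallest positive entry of A.  If, in each of N consecutive
   windows of B steps, every node is updated at least once, then along a path
   r -> ... -> i of G(A) the root r (which keeps weight a_rr >= a on its own
   value whenever it is updated) passes a weight at least a^(NB) of its initial
   value on to every node i, so the spread max x - min x shrinks by the factor
   1 - a^(NB).  Conditions (b) and (c) guarantee that, whatever the past, the
   schedule follows such a covering pattern with B = N q during the next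
   L = N B steps with conditional probability at least alpha^L; J such windows
   in a row shrink the spread by (1 - a^L)^J, enough to push the disagreement
   below eps.  Hence the probability that none of the first m blocks of J L
   steps does so is at most (1 - alpha^(J L))^m. *)

Section Probability.
Context (R : realType) (d : measure_display) (T : measurableType d)
  (P : probability T R).

Definition pr (E : set T) : R := fine (P E).

Lemma prE (E : set T) : measurable E -> P E = (pr E)%:E.
Proof. by move=> mE; rewrite /pr fineK // fin_num_measure. Qed.

Lemma pr_ge0 (E : set T) : 0 <= pr E.
Proof. exact/fine_ge0/measure_ge0. Qed.

Lemma pr_le1 (E : set T) : measurable E -> pr E <= 1.
Proof. by move=> mE; rewrite -lee_fin -prE // probability_le1. Qed.

Lemma pr_setT : pr setT = 1.
Proof. by rewrite /pr probability_setT. Qed.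

Lemma pr_set0 : pr set0 = 0.
Proof. by rewrite /pr measure0. Qed.

Lemma le_pr (E F : set T) : measurable E -> measurable F -> E `<=` F ->
  pr E <= pr F.
Proof. by move=> mE mF EF; rewrite -lee_fin -!prE // le_measure ?inE. Qed.

Lemma pr_setI_gt0r (E F : set T) : measurable E -> measurable F ->
  0 < pr (E `&` F) -> 0 < pr F.
Proof.
by move=> mE mF /lt_le_trans; apply; apply: le_pr => //; apply: measurableI.
Qed.

Lemma prU (E F : set T) : measurable E -> measurable F -> E `&` F = set0 ->
  pr (E `|` F) = pr E + pr F.
Proof.
move=> mE mF EF0; have mEF : measurable (E `|` F) by exact: measurableU.
by apply: EFin_inj; rewrite EFinD -!prE //; apply: measureU.
Qed.

Lemma pr_gt0_neq0 (E : set T) : measurable E -> 0 < pr E -> P E != 0%E.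
Proof. by move=> mE E_gt0; rewrite prE // eqe gt_eqF. Qed.

Lemma cprobE (E B : set T) : cprob P E B = pr (E `&` B) / pr B.
Proof. by []. Qed.

Lemma cprob_neq0 (E B : set T) : cprob P E B != 0 -> 0 < pr (E `&` B).
Proof.
rewrite lt0r pr_ge0 andbT cprobE.
by apply: contra => /eqP ->; rewrite mul0r.
Qed.

Lemma pr_partition (I : finType) (Z : I -> set T) (Y : set T) :
    (forall i, measurable (Y `&` Z i)) -> trivIset setT Z ->
    \bigcup_i Z i = setT ->
  measurable Y /\ pr Y = \sum_(i : I) pr (Y `&` Z i).
Proof.
move=> mYZ tZ cZ.
have YE : Y = \bigcup_(i in setT) (Y `&` Z i).
  by rewrite -setI_bigcupr cZ setIT.
have mY : measurable Y by rewrite YE; apply: fin_bigcup_measurable.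
split => //; apply: EFin_inj.
rewrite -prE // {1}YE measure_fin_bigcup //;
  [|exact: finite_finset|exact: trivIset_setIl].
rewrite (fsbigE (enum I)) ?enum_uniq //= => [|i _]; last by rewrite mem_enum.
rewrite -sumEFin big_enum_cond /=.
by apply: eq_big => [i|i _]; rewrite ?in_setT // prE.
Qed.

End Probability.

Lemma exists_min_pos_entry (R : realDomainType) m n (A : 'M[R]_(m, n)) :
  exists2 a : R, 0 < a & forall i j, 0 < A i j -> a <= A i j.
Proof.
exists (\big[Order.min/1]_(ij | 0 < A ij.1 ij.2) A ij.1 ij.2).
  by apply: lt_bigmin.
move=> i j Aij; exact: (@bigmin_le_cond _ _ _ 1 (i, j)
  (fun ij => 0 < A ij.1 ij.2) (fun ij => A ij.1 ij.2)).
Qed.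

Lemma exists_pow_lt (R : realType) (c C D e : R) : 0 <= c < 1 -> 0 <= C ->
  0 < e -> exists2 J, (0 < J)%N & C * (c ^+ J * D) ^+ 2 < e.
Proof.
move=> /andP[c_ge0 c_lt1] C_ge0 e_gt0.
pose K := C * D ^+ 2 + 1.
have K_gt0 : 0 < K by rewrite ltr_wpDl // mulr_ge0 // sqr_ge0.
have c_norm : `|c| < 1 by rewrite ger0_norm.
have /cvgrPdist_lt/(_ (e / K) (divr_gt0 e_gt0 K_gt0))[J0 _ cJ0] :=
  cvg_expr c_norm.
have {}cJ0 : c ^+ J0 < e / K.
  by have := cJ0 J0 (leqnn _); rewrite sub0r normrN ger0_norm // exprn_ge0.
exists J0.+1 => //; rewrite exprMn mulrCA.
have cJ_le : (c ^+ J0.+1) ^+ 2 <= c ^+ J0.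
  rewrite -exprM; apply: ler_wiXn2l => //; first exact: ltW.
  by rewrite muln2 -addnn addSn ltnW // ltnS leq_addr.
apply: (@le_lt_trans _ _ (c ^+ J0 * K)); last by rewrite -ltr_pdivlMr.
apply: ler_pM => //; first exact: sqr_ge0.
  by rewrite mulr_ge0 // sqr_ge0.
by rewrite lerDl.
Qed.

Lemma cvg_expr_divn (R : realType) (c : R) n : 0 <= c < 1 -> (0 < n)%N ->
  (fun K => c ^+ (K.-1 %/ n)) @ \oo --> 0.
Proof.
move=> /andP[c_ge0 c_lt1] n_gt0.
have c_norm : `|c| < 1 by rewrite ger0_norm.
apply/cvgrPdist_lt => e e_gt0.
have /cvgrPdist_lt/(_ e e_gt0)[M _ cM] := cvg_expr c_norm.
exists (M * n).+1 => // K /= MK; apply: cM => /=.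
by rewrite leq_divRL // -ltnS; case: K MK.
Qed.

Section Evolution.
Context (R : realType) (N : nat) (A : 'M[R]_N).
Implicit Types (g : nat -> {set 'I_N}) (x y : 'cV[R]_N).

Fixpoint evolve g (k n : nat) x : 'cV[R]_N :=
  if n is n'.+1 then Asub A (g (k + n')%N) *m evolve g k n' x else x.

Definition in_band x (m D : R) := forall i, m <= x i 0 <= m + D.

Definition contracts g k n (c : R) := forall x m D, in_band x m D ->
  exists m', in_band (evolve g k n x) m' (c * D).

Definition visited g k B v := exists2 t, (t < B)%N & v \in g (k + t)%N.

Definition covered g k B := forall v, visited g k B v.

Lemma traj_evolve (T : Type) (sig : nat -> T -> {set 'I_N}) x1 n w :
  traj A sig x1 n w = evolve (sig^~ w) 1 n x1.
Proof. by elim: n => //= n ->; rewrite add1n. Qed.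

Lemma evolveD g k n1 n2 x :
  evolve g k (n1 + n2) x = evolve g (k + n1) n2 (evolve g k n1 x).
Proof. by elim: n2 => [|n2 IH]; rewrite ?addn0 // addnS /= IH addnA. Qed.

Lemma eq_evolve g g' k n x : (forall i, (k <= i < k + n)%N -> g i = g' i) ->
  evolve g k n x = evolve g' k n x.
Proof.
elim: n => //= n IH gg'.
have -> : g (k + n)%N = g' (k + n)%N.
  by apply: gg'; rewrite leq_addr addnS ltnSn.
rewrite IH // => i /andP[ki ikn].
by rewrite gg' // ki (leq_trans ikn) // leq_add2l.
Qed.

Lemma exists_in_band x : exists m D, in_band x m D.
Proof.
pose S := \sum_i `|x i 0|; exists (- S), (S + S) => i.
have : `|x i 0| <= S.
  by rewrite /S (bigD1 i) //= lerDl; apply: sumr_ge0.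
by rewrite ler_norml => /andP[? ?]; apply/andP; split; lra.
Qed.

Lemma mulmx_AsubE s y i :
  (Asub A s *m y) i 0 = if i \in s then \sum_l A i l * y l 0 else y i 0.
Proof.
rewrite mxE; case: ifP => iS.
  by apply: eq_bigr => l _; rewrite mxE iS.
rewrite (bigD1 i) //= !mxE iS eqxx mul1r big1 ?addr0 // => l li.
by rewrite mxE iS eq_sym (negbTE li) mul0r.
Qed.

Hypothesis A_ge0 : forall i j, 0 <= A i j.
Hypothesis A_sum1 : forall i, \sum_(j < N) A i j = 1.

Lemma entry_le1 i j : A i j <= 1.
Proof. by rewrite -(A_sum1 i) (bigD1 j) //= lerDl sumr_ge0. Qed.

Lemma in_band_convex y m D i : in_band y m D ->
  m <= \sum_l A i l * y l 0 <= m + D.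
Proof.
move=> y_band; apply/andP; split.
  rewrite -[m]mul1r -(A_sum1 i) mulr_suml; apply: ler_sum => l _.
  by apply: ler_wpM2l => //; case/andP: (y_band l).
rewrite -[m + D]mul1r -(A_sum1 i) mulr_suml; apply: ler_sum => l _.
by apply: ler_wpM2l => //; case/andP: (y_band l).
Qed.

Lemma in_band_Asub s y m D : in_band y m D -> in_band (Asub A s *m y) m D.
Proof.
move=> y_band i; rewrite mulmx_AsubE.
by case: ifP => _; [apply: in_band_convex|].
Qed.

Lemma in_band_evolve g k n x m D : in_band x m D ->
  in_band (evolve g k n x) m D.
Proof. by move=> x_band; elim: n => //= n IH; apply: in_band_Asub. Qed.

Lemma contractsD g k n1 n2 c1 c2 : contracts g k n1 c1 ->
  contracts g (k + n1) n2 c2 -> contracts g k (n1 + n2) (c2 * c1).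
Proof.
move=> c1_contr c2_contr x m D x_band; have [m1 band1] := c1_contr x m D x_band.
by have [m2 band2] := c2_contr _ _ _ band1; exists m2; rewrite evolveD -mulrA.
Qed.

Lemma eq_contracts g g' k n c :
  (forall i, (k <= i < k + n)%N -> g' i = g i) ->
  contracts g k n c -> contracts g' k n c.
Proof.
move=> gg' g_contr x m D x_band; have [m' band'] := g_contr x m D x_band.
by exists m'; rewrite (eq_evolve _ gg').
Qed.

Lemma disagreement_le x m D : (0 < N)%N -> in_band x m D ->
  disagreement x <= N%:R * D ^+ 2.
Proof.
move=> N_gt0 x_band; rewrite /disagreement; set mu := (N%:R^-1 * _).
have N_pos : 0 < N%:R :> R by rewrite ltr0n.
have sumC (c : R) : \sum_(i < N) c = N%:R * c.
  by rewrite sumr_const card_ord mulr_natl.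
have mu_band : m <= mu <= m + D.
  have NK (c : R) : N%:R^-1 * (N%:R * c) = c by rewrite mulKf ?gt_eqF.
  rewrite /mu; apply/andP; split.
    rewrite -{1}(NK m) ler_pM2l ?invr_gt0 // -sumC; apply: ler_sum => i _.
    by case/andP: (x_band i).
  rewrite -{1}(NK (m + D)) ler_pM2l ?invr_gt0 // -sumC; apply: ler_sum => i _.
  by case/andP: (x_band i).
rewrite -sumC; apply: ler_sum => j _.
case/andP: (x_band j) => ? ?; case/andP: mu_band => ? ?.
have lo : 0 <= D - (x j 0 - mu) by lra.
have hi : 0 <= D + (x j 0 - mu) by lra.
by have := mulr_ge0 lo hi; rewrite !expr2; nra.
Qed.

Lemma disagreement_contracts g x m D c j n K : (0 < N)%N -> in_band x m D ->
  contracts g (j * n).+1 n c -> (j.+1 * n <= K)%N ->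
  disagreement (evolve g 1 K x) <= N%:R * (c * D) ^+ 2.
Proof.
move=> N_gt0 x_band g_contr jnK; rewrite -(subnKC jnK) mulSnr !evolveD add1n.
have [m' band'] := g_contr _ _ _ (in_band_evolve g 1 (j * n) x_band).
exact: disagreement_le N_gt0 (in_band_evolve _ _ _ band').
Qed.

(* Holds when y_i is a convex combination giving weight at least gam to rho
   and the remaining weight to values in [m, m + D]. *)
Definition anchored y m D (rho gam : R) i :=
  (1 - gam) * m + gam * rho <= y i 0 <= (1 - gam) * (m + D) + gam * rho.

Lemma anchored_le y m D rho gam1 gam2 i : m <= rho <= m + D ->
  0 <= gam2 <= gam1 -> anchored y m D rho gam1 i -> anchored y m D rho gam2 i.
Proof.
move=> /andP[m_rho rho_mD] /andP[gam2_ge0 gam21] /andP[y_lo y_hi].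
have gap_lo : 0 <= (gam1 - gam2) * (rho - m) by rewrite mulr_ge0 ?subr_ge0.
have gap_hi : 0 <= (gam1 - gam2) * (m + D - rho) by rewrite mulr_ge0 ?subr_ge0.
by apply/andP; split; nra.
Qed.

Lemma anchored_Asub y m D rho gam (s : {set 'I_N}) a p i : in_band y m D ->
  m <= rho <= m + D -> 0 <= gam -> anchored y m D rho gam p ->
  0 <= a <= A i p -> i \in s -> anchored (Asub A s *m y) m D rho (a * gam) i.
Proof.
move=> y_band /andP[m_rho rho_mD] gam_ge0 /andP[p_lo p_hi] /andP[a_ge0 a_le] iS.
rewrite /anchored mulmx_AsubE iS (bigD1 p) //=.
have rest_sum : \sum_(l < N | l != p) A i l = 1 - A i p.
  by have := A_sum1 i; rewrite (bigD1 p) //=; lra.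
have rest_lo : (1 - A i p) * m <= \sum_(l < N | l != p) A i l * y l 0.
  rewrite -rest_sum mulr_suml; apply: ler_sum => l _; apply: ler_wpM2l => //.
  by case/andP: (y_band l).
have rest_hi : \sum_(l < N | l != p) A i l * y l 0 <= (1 - A i p) * (m + D).
  rewrite -rest_sum mulr_suml; apply: ler_sum => l _; apply: ler_wpM2l => //.
  by case/andP: (y_band l).
have Ap_lo := ler_wpM2l (A_ge0 i p) p_lo.
have Ap_hi := ler_wpM2l (A_ge0 i p) p_hi.
have gap_lo : 0 <= (A i p - a) * (gam * (rho - m)).
  by rewrite !mulr_ge0 ?subr_ge0.
have gap_hi : 0 <= (A i p - a) * (gam * (m + D - rho)).
  by rewrite !mulr_ge0 ?subr_ge0.
by apply/andP; split; nra.
Qed.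

Lemma anchored_Asub_notin y m D rho gam (s : {set 'I_N}) i : i \notin s ->
  anchored y m D rho gam i -> anchored (Asub A s *m y) m D rho gam i.
Proof. by move=> iS; rewrite /anchored mulmx_AsubE (negbTE iS). Qed.

Section Window.
Variables (a : R) (r : 'I_N) (g : nat -> {set 'I_N}) (k B : nat).
Variables (x : 'cV[R]_N) (m D : R).
Hypothesis a_gt0 : 0 < a.
Hypothesis a_le_entry : forall i j, 0 < A i j -> a <= A i j.
Hypothesis A_rr : 0 < A r r.
Hypothesis r_root : is_root A r.
Hypothesis x_band : in_band x m D.
Hypothesis g_covers : forall j, (j < N)%N -> covered g (k + j * B) B.

Let y t := evolve g k t x.
Let rho := x r 0.
Let rho_band : m <= rho <= m + D. Proof. exact: x_band. Qed.
Let y_band t : in_band (y t) m D. Proof. exact: in_band_evolve. Qed.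
Let a_le1 : a <= 1.
Proof. exact: le_trans (a_le_entry A_rr) (entry_le1 r r). Qed.

Lemma anchored_step t p i : anchored (y t) m D rho (a ^+ t) p -> 0 < A i p ->
  i \in g (k + t)%N \/ anchored (y t) m D rho (a ^+ t) i ->
  anchored (y t.+1) m D rho (a ^+ t.+1) i.
Proof.
move=> p_anch Aip; have at_ge0 := exprn_ge0 t (ltW a_gt0).
case: (boolP (i \in g (k + t)%N)) => [iS _|iS [//|i_anch]].
  rewrite exprS; apply: anchored_Asub p_anch _ iS => //.
  by rewrite ltW // a_le_entry.
apply: anchored_le (anchored_Asub_notin iS i_anch) => //.
by rewrite exprS (mulr_ge0 (ltW a_gt0) at_ge0) (ler_piMl at_ge0 a_le1).
Qed.

Lemma anchored_root t : anchored (y t) m D rho (a ^+ t) r.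
Proof.
elim: t => [|t IH].
  by rewrite /anchored expr0 subrr !mul0r !add0r !mul1r /y /= lexx.
exact: anchored_step IH A_rr (or_intror IH).
Qed.

Lemma anchored_after_update e t0 p i :
  (forall t, (e <= t)%N -> anchored (y t) m D rho (a ^+ t) p) ->
  0 < A i p -> (e <= t0)%N -> i \in g (k + t0)%N ->
  forall t, (t0 < t)%N -> anchored (y t) m D rho (a ^+ t) i.
Proof.
move=> p_anch Aip et0 iS; elim=> // t IH; rewrite ltnS leq_eqVlt.
case/predU1P => [<-|t0t].
  exact: anchored_step (p_anch _ et0) Aip (or_introl iS).
exact: anchored_step (p_anch _ (leq_trans et0 (ltnW t0t))) Aip
  (or_intror (IH t0t)).
Qed.

Lemma anchored_path (p : seq 'I_N) : path (graph_rel A) r p ->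
  (size p <= N)%N ->
  forall t, (size p * B <= t)%N -> anchored (y t) m D rho (a ^+ t) (last r p).
Proof.
elim/last_ind: p => [|p z IH]; first by move=> _ _ t _; apply: anchored_root.
rewrite rcons_path size_rcons last_rcons => /andP[p_path pz] p_size t.
have [t' t'B zS] := g_covers p_size z; rewrite -addnA in zS.
move=> pBt; apply: (anchored_after_update (IH p_path (ltnW p_size)) pz
  (leq_addr _ _) zS).
by apply: leq_trans pBt; rewrite mulSnr ltn_add2l.
Qed.

Lemma anchored_all i : anchored (y (N * B)) m D rho (a ^+ (N * B)) i.
Proof.
have /connectP[p p_path ->] := r_root i.
have [p' p'_path p'_uniq _] := shortenP p_path.
have p'_size : (size p' < N)%N.
  by have := max_card (mem (r :: p')); rewrite card_ord (card_uniqP p'_uniq).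
by apply: anchored_path => //; [exact: ltnW | rewrite leq_mul2r ltnW ?orbT].
Qed.

Lemma evolve_window_band :
  exists m', in_band (y (N * B)) m' ((1 - a ^+ (N * B)) * D).
Proof.
exists ((1 - a ^+ (N * B)) * m + a ^+ (N * B) * rho) => i.
by have /andP[lo hi] := anchored_all i; apply/andP; split; lra.
Qed.

End Window.

Lemma covered_contracts a r g k B : 0 < a ->
  (forall i j, 0 < A i j -> a <= A i j) -> 0 < A r r -> is_root A r ->
  (forall j, (j < N)%N -> covered g (k + j * B) B) ->
  contracts g k (N * B) (1 - a ^+ (N * B)).
Proof.
move=> a_gt0 a_le A_rr r_root g_cov x m D x_band.
exact: (evolve_window_band a_gt0 a_le A_rr r_root x_band g_cov).
Qed.

End Evolution.

Section Histories.
Context (R : realType) (N : nat) (d : measure_display) (T : measurableType d)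
  (P : probability T R) (sig : nat -> T -> {set 'I_N}).
Hypothesis sig_measurable : forall k s, measurable [set w | sig k w = s].
Implicit Types (g : nat -> {set 'I_N}) (S X : set T).

Local Notation pr := (pr P).
Local Notation E := (hist_event sig).

Definition upd g k s : nat -> {set 'I_N} := fun i => if i == k then s else g i.

Definition agree g g' m := forall i, (i < m)%N -> g' i = g i.

Lemma hist_event1 g : E 1 g = setT.
Proof. by apply/seteqP; split => // w _ [|i]. Qed.

Lemma hist_eventS k g : (0 < k)%N ->
  E k.+1 g = E k g `&` [set w | sig k w = g k].
Proof.
move=> k_gt0; apply/seteqP; split => w.
  move=> Eg; split; last by apply: Eg; rewrite k_gt0 /=.
  by move=> i /andP[i_gt0 ik]; apply: Eg; rewrite i_gt0 ltnS ltnW.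
case=> Eg gk i /andP[i_gt0]; rewrite ltnS leq_eqVlt => /predU1P[-> //|ik].
by apply: Eg; rewrite i_gt0.
Qed.

Lemma hist_event_measurable k g : measurable (E k g).
Proof.
elim: k => [|[|k] IH]; last by rewrite hist_eventS //; apply: measurableI.
  by rewrite (_ : E 0 g = setT) //; apply/seteqP; split => // w _ [|i].
by rewrite hist_event1.
Qed.

Lemma eq_hist_event k g g' : agree g g' k -> E k g' = E k g.
Proof.
move=> gg'; apply/seteqP; split => w Ew i /andP[i_gt0 ik].
  by rewrite -gg' //; apply: Ew; rewrite i_gt0.
by rewrite gg' //; apply: Ew; rewrite i_gt0.
Qed.

Lemma agree_upd g k s : agree g (upd g k s) k.
Proof. by move=> i ik; rewrite /upd ltn_eqF. Qed.

Lemma agree_trans g1 g2 g3 m1 m2 : (m1 <= m2)%N ->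
  agree g1 g2 m1 -> agree g2 g3 m2 -> agree g1 g3 m1.
Proof. by move=> m12 g12 g23 i im1; rewrite g23 ?g12 // (leq_trans im1). Qed.

Lemma hist_event_upd k g s : (0 < k)%N ->
  E k.+1 (upd g k s) = E k g `&` [set w | sig k w = s].
Proof.
move=> k_gt0; rewrite hist_eventS // {2}/upd eqxx.
by rewrite (eq_hist_event (@agree_upd g k s)).
Qed.

Lemma exists_upd_gt0 k g X : (0 < k)%N -> measurable X ->
  0 < pr (X `&` E k g) -> exists s, 0 < pr (X `&` E k.+1 (upd g k s)).
Proof.
move=> k_gt0 mX XE_gt0.
have XEs s : X `&` E k g `&` [set w | sig k w = s] = X `&` E k.+1 (upd g k s).
  by rewrite hist_event_upd // setIA.
have mXEs s : measurable (X `&` E k g `&` [set w | sig k w = s]).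
  by rewrite XEs; apply: measurableI => //; apply: hist_event_measurable.
have trivZ : trivIset setT (fun s => [set w | sig k w = s]).
  by move=> s s' _ _ [w [/= <- <-]].
have bigZ : \bigcup_s [set w | sig k w = s] = setT.
  by apply/seteqP; split => // w _; exists (sig k w).
have [_ XE_sum] := pr_partition P mXEs trivZ bigZ.
have [s /andP[_ s_gt0]] :
    exists s, true && (0 < pr (X `&` E k g `&` [set w | sig k w = s])).
  apply: psumr_neq0P => [s _|]; first exact: pr_ge0.
  by rewrite -XE_sum; apply/eqP; rewrite gt_eqF.
by exists s; rewrite -XEs.
Qed.

Definition determined n S := forall w w',
  (forall i, (0 < i <= n)%N -> sig i w = sig i w') -> S w -> S w'.

(* [f j] prescribes the value of [sig j.+1]. *)
Definition hist_atom n (f : {ffun 'I_n -> {set 'I_N}}) : set T :=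
  E n.+1 (fun i => if insub i.-1 is Some j then f j else finset.set0).

Lemma trivIset_hist_atom n : trivIset setT (@hist_atom n).
Proof.
move=> f f' _ _ [w [fw f'w]]; apply/ffunP => j.
have j_hist : (0 < j.+1 < n.+1)%N by rewrite ltn0Sn ltnS ltn_ord.
by move: (fw _ j_hist) (f'w _ j_hist) => /=; rewrite valK => <-.
Qed.

Lemma bigcup_hist_atom n : \bigcup_f @hist_atom n f = setT.
Proof.
apply/seteqP; split => // w _; exists [ffun j : 'I_n => sig j.+1 w] => //.
move=> i /andP[i_gt0 i_le]; case: insubP => [j _ ij|/negP[]].
  by rewrite ffunE ij prednK.
by rewrite -ltnS prednK.
Qed.

Lemma determined_atom n S f : determined n S ->
  S `&` hist_atom f = hist_atom f \/ S `&` @hist_atom n f = set0.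
Proof.
move=> dS; have [[w [Sw fw]]|noSf] := pselect (exists w, (S `&` hist_atom f) w).
  left; apply/setIidr => w' f'w; apply: dS Sw => i /andP[i_gt0 i_le].
  have i_hist : (0 < i < n.+1)%N by rewrite i_gt0 ltnS.
  by rewrite (fw i i_hist) (f'w i i_hist).
by right; apply/seteqP; split => // w' Sfw'; apply: noSf; exists w'.
Qed.

Lemma measurable_setI_hist_atom n S f : determined n S ->
  measurable (S `&` @hist_atom n f).
Proof.
move=> dS.
by case: (determined_atom f dS) => ->; [apply: hist_event_measurable|].
Qed.

Lemma determined_measurable n S : determined n S -> measurable S.
Proof.
move=> dS; have mSf f := measurable_setI_hist_atom f dS.
by have [] := pr_partition P mSf (@trivIset_hist_atom n) (@bigcup_hist_atom n).
Qed.

Lemma determined_cond_le n S X c : determined n S -> measurable X -> 0 <= c ->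
  (forall g, pr (E n.+1 g `&` X) <= c * pr (E n.+1 g)) ->
  pr (S `&` X) <= c * pr S.
Proof.
move=> dS mX c_ge0 condX; have mSf f := measurable_setI_hist_atom f dS.
have mSXf f : measurable (S `&` X `&` @hist_atom n f).
  by rewrite setIAC; apply: measurableI.
have tA := @trivIset_hist_atom n; have cA := @bigcup_hist_atom n.
have [_ ->] := pr_partition P mSXf tA cA.
have [_ ->] := pr_partition P mSf tA cA.
rewrite mulr_sumr; apply: ler_sum => f _; rewrite setIAC.
case: (determined_atom f dS) => ->; last by rewrite set0I pr_set0 mulr0.
exact: condX.
Qed.

Lemma measurable_traj (A : 'M[R]_N) x1 n (Phi : 'cV[R]_N -> Prop) :
  measurable [set w | Phi (traj A sig x1 n w)].
Proof.
apply: (@determined_measurable n) => w w' ww'.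
by rewrite /= !traj_evolve (@eq_evolve _ _ _ _ (sig^~ w')).
Qed.

(* From every history of positive probability there is a continuation of
   n steps satisfying Q whose probability is at least b times that of the
   history: b bounds from below the conditional probability of Q. *)
Definition extendable n (b : R) (Q : nat -> (nat -> {set 'I_N}) -> Prop) :=
  forall k g, (0 < k)%N -> 0 < pr (E k g) ->
    exists g', [/\ agree g g' k, b * pr (E k g) <= pr (E (k + n) g') & Q k g'].

Definition window_local n (Q : nat -> (nat -> {set 'I_N}) -> Prop) :=
  forall k g g', (forall i, (k <= i < k + n)%N -> g' i = g i) ->
    Q k g -> Q k g'.

Definition fails (Q : nat -> (nat -> {set 'I_N}) -> Prop) k : set T :=
  [set w | ~ Q k (sig^~ w)].

Lemma extendable_nil Q : (forall k g, Q k g) -> extendable 0 1 Q.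
Proof. by move=> Q_all k g _ _; exists g; rewrite addn0 mul1r. Qed.

Lemma sub_extendable n b b' Q Q' : b' <= b -> (forall k g, Q k g -> Q' k g) ->
  extendable n b Q -> extendable n b' Q'.
Proof.
move=> b'b QQ' extQ k g k_gt0 Eg_gt0.
have [g' [gg' bE Qg']] := extQ k g k_gt0 Eg_gt0.
exists g'; split => //; last exact: QQ'.
by apply: le_trans bE; rewrite ler_wpM2r ?pr_ge0.
Qed.

Lemma extendable_cat n1 n2 b1 b2 Q1 Q2 : 0 < b1 -> 0 <= b2 ->
  window_local n1 Q1 -> extendable n1 b1 Q1 -> extendable n2 b2 Q2 ->
  extendable (n1 + n2) (b2 * b1) (fun k g => Q1 k g /\ Q2 (k + n1)%N g).
Proof.
move=> b1_gt0 b2_ge0 locQ1 extQ1 extQ2 k g k_gt0 Eg_gt0.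
have [g1 [gg1 b1E Q1g1]] := extQ1 k g k_gt0 Eg_gt0.
have kn1_gt0 : (0 < k + n1)%N by rewrite addn_gt0 k_gt0.
have Eg1_gt0 : 0 < pr (E (k + n1) g1).
  by apply: lt_le_trans b1E; rewrite mulr_gt0.
have [g2 [g12 b2E Q2g2]] := extQ2 _ _ kn1_gt0 Eg1_gt0.
exists g2; split.
- exact: agree_trans (leq_addr _ _) gg1 g12.
- by rewrite addnA; apply: le_trans b2E; rewrite -mulrA ler_wpM2l.
- by split => //; apply: locQ1 Q1g1 => i /andP[_ ik]; apply: g12.
Qed.

Lemma extendable_le1 n b Q : extendable n b Q -> b <= 1.
Proof.
move=> extQ; have := extQ 1%N (fun=> finset.set0) isT.
rewrite hist_event1 pr_setT ltr01 => /(_ isT)[g' [_ bE _]].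
rewrite mulr1 in bE.
exact: le_trans bE (pr_le1 _ (hist_event_measurable _ _)).
Qed.

Lemma determined_fails n Q k m : window_local n Q -> (0 < k)%N ->
  (k + n <= m.+1)%N -> determined m (fails Q k).
Proof.
move=> locQ k_gt0 knm w w' ww' Fw Qw'; apply: Fw; apply: locQ Qw'.
move=> i /andP[ki ikn]; apply: ww'.
by rewrite (leq_trans k_gt0 ki) -ltnS (leq_trans ikn).
Qed.

Lemma extendable_fails_le n b Q k g : extendable n b Q -> window_local n Q ->
  (0 < k)%N -> pr (E k g `&` fails Q k) <= (1 - b) * pr (E k g).
Proof.
move=> extQ locQ k_gt0; have mE := hist_event_measurable k g.
have mF : measurable (fails Q k).
  exact: determined_measurable (determined_fails locQ k_gt0 (leqnSn (k + n))).
have mEF : measurable (E k g `&` fails Q k) by apply: measurableI.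
have [Eg_gt0|Eg_le0] := ltrP 0 (pr (E k g)); last first.
  have Eg0 : pr (E k g) = 0 by apply/eqP; rewrite eq_le Eg_le0 pr_ge0.
  by rewrite Eg0 mulr0 -Eg0 le_pr //; apply: subIsetl.
have [g' [gg' bE Qg']] := extQ k g k_gt0 Eg_gt0.
have mE' := hist_event_measurable (k + n) g'.
have E'_sub : E (k + n) g' `<=` E k g.
  move=> w E'w i /andP[i_gt0 ik]; rewrite -gg' //.
  by apply: E'w; rewrite i_gt0 (leq_trans ik) ?leq_addr.
have disj : E k g `&` fails Q k `&` E (k + n) g' = set0.
  apply/seteqP; split => // w [[_ Fw] E'w]; apply: Fw; apply: locQ Qg'.
  by move=> i /andP[ki ikn]; apply: E'w; rewrite (leq_trans k_gt0 ki).
have := prU P mEF mE' disj.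
have : pr (E k g `&` fails Q k `|` E (k + n) g') <= pr (E k g).
  by apply: le_pr => //; [apply: measurableU | move=> w [[]|/E'_sub]].
lra.
Qed.

Lemma determined_fails_all n Q m : window_local n Q ->
  determined (m * n) [set w | forall j, (j < m)%N -> fails Q (j * n).+1 w].
Proof.
move=> locQ w w' ww' Fw j jm.
apply: (determined_fails locQ _ _ ww' (Fw j jm)) => //.
by rewrite addSn ltnS -mulSnr leq_mul2r jm orbT.
Qed.

Lemma fails_all_le n b Q m : 0 < b -> extendable n b Q -> window_local n Q ->
  pr [set w | forall j, (j < m)%N -> fails Q (j * n).+1 w] <= (1 - b) ^+ m.
Proof.
move=> b_gt0 extQ locQ.
have b1 : 0 <= 1 - b by rewrite subr_ge0 (extendable_le1 extQ).
have dF m' := determined_fails_all (m := m') locQ.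
elim: m => [|m IH]; first exact/pr_le1/(determined_measurable (dF 0%N)).
have -> : [set w | forall j, (j < m.+1)%N -> fails Q (j * n).+1 w] =
    [set w | forall j, (j < m)%N -> fails Q (j * n).+1 w] `&`
    fails Q (m * n).+1.
  apply/seteqP; split => w.
    by move=> Fw; split => [j jm|]; apply: Fw; rewrite // ltnS ltnW.
  by move=> [Fw Fmw] j; rewrite ltnS leq_eqVlt => /predU1P[->|/Fw].
have mFm : measurable (fails Q (m * n).+1).
  exact: determined_measurable (determined_fails locQ (ltn0Sn _) (leqnSn _)).
have condF g : pr (E (m * n).+1 g `&` fails Q (m * n).+1) <=
    (1 - b) * pr (E (m * n).+1 g).
  exact: (extendable_fails_le g extQ locQ (ltn0Sn _)).
apply: le_trans (determined_cond_le (dF m) mFm b1 condF) _.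
by rewrite exprS ler_wpM2l.
Qed.

End Histories.

Section Consensus.
Context (R : realType) (N : nat) (d : measure_display) (T : measurableType d)
  (P : probability T R) (sig : nat -> T -> {set 'I_N}).
Hypothesis sig_measurable : forall k s, measurable [set w | sig k w = s].
Implicit Types (g : nat -> {set 'I_N}) (X : set T).

Local Notation pr := (pr P).
Local Notation E := (hist_event sig).
Local Notation extendable := (extendable P sig).
Local Notation window_local := (@window_local N).

Let mE k g : measurable (E k g) := hist_event_measurable sig_measurable k g.

Variable alpha : R.
Hypothesis alpha_gt0 : 0 < alpha.
Hypothesis cprob_ge : forall k g s, (0 < k)%N -> P (E k g) != 0%E ->
  cprob P [set w | sig k w = s] (E k g) != 0 ->
  alpha <= cprob P [set w | sig k w = s] (E k g).

Lemma hist_step_ge k g s : (0 < k)%N -> 0 < pr (E k g) ->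
  0 < pr (E k.+1 (upd g k s)) -> alpha * pr (E k g) <= pr (E k.+1 (upd g k s)).
Proof.
move=> k_gt0 Eg_gt0 Es_gt0.
have cprob_upd : cprob P [set w | sig k w = s] (E k g) =
    pr (E k.+1 (upd g k s)) / pr (E k g).
  by rewrite cprobE hist_event_upd // setIC.
rewrite -ler_pdivlMr // -cprob_upd; apply: cprob_ge => //.
  exact: pr_gt0_neq0 (mE _ _) Eg_gt0.
by rewrite cprob_upd mulf_neq0 ?invr_eq0 ?gt_eqF.
Qed.

Lemma extend_hist n k g X : (0 < k)%N -> measurable X ->
  0 < pr (X `&` E k g) -> exists g', [/\ agree g g' k,
    0 < pr (X `&` E (k + n) g') & alpha ^+ n * pr (E k g) <= pr (E (k + n) g')].
Proof.
move=> k_gt0 mX XEg_gt0; elim: n => [|n [g' [gg' XEg'_gt0 bEg']]].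
  by exists g; rewrite addn0 expr0 mul1r.
have kn_gt0 : (0 < k + n)%N by rewrite addn_gt0 k_gt0.
have [s XEs_gt0] := exists_upd_gt0 sig_measurable kn_gt0 mX XEg'_gt0.
have Eg'_gt0 := pr_setI_gt0r mX (mE _ _) XEg'_gt0.
have Es_gt0 := pr_setI_gt0r mX (mE _ _) XEs_gt0.
exists (upd g' (k + n) s); rewrite addnS; split => //.
  exact: agree_trans (leq_addr _ _) gg' (@agree_upd _ g' (k + n) s).
apply: le_trans _ (hist_step_ge kn_gt0 Eg'_gt0 Es_gt0).
by rewrite exprS -mulrA ler_wpM2l // ltW.
Qed.

Variable q : nat.
Hypothesis cprob_cover : forall k g, (0 < k)%N -> P (E k g) != 0%E ->
  forall v : 'I_N, exists t, (t < q)%N /\ exists s : {set 'I_N},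
    v \in s /\ cprob P [set w | sig (k + t)%N w = s] (E k g) != 0.

Lemma extendable_visited v :
  extendable q (alpha ^+ q) (fun k g => visited g k q v).
Proof.
move=> k g k_gt0 Eg_gt0.
have Eg_neq0 := pr_gt0_neq0 (mE _ _) Eg_gt0.
have [t [tq [s [vs cprob_neq0']]]] := cprob_cover k_gt0 Eg_neq0 v.
pose X := [set w | sig (k + t)%N w = s].
have XEg_gt0 : 0 < pr (X `&` E k g) := cprob_neq0 cprob_neq0'.
have [g1 [gg1 XEg1_gt0 bEg1]] :=
  extend_hist t k_gt0 (sig_measurable _ _) XEg_gt0.
have kt_gt0 : (0 < k + t)%N by rewrite addn_gt0 k_gt0.
pose g2 := upd g1 (k + t) s.
have XE2 : E (k + t).+1 g2 = E (k + t) g1 `&` X by rewrite hist_event_upd.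
have Eg1_gt0 := pr_setI_gt0r (sig_measurable _ _) (mE _ _) XEg1_gt0.
have E2_gt0 : 0 < pr (setT `&` E (k + t).+1 g2) by rewrite setTI XE2 setIC.
have bE2 := hist_step_ge kt_gt0 Eg1_gt0
  (pr_setI_gt0r measurableT (mE _ _) E2_gt0).
have [g3 [g23 _ bEg3]] := extend_hist (q - t.+1) (ltn0Sn _) measurableT E2_gt0.
exists g3; split.
- apply: agree_trans (leq_addr t k) gg1 _.
  exact: agree_trans (leqnSn _) (@agree_upd _ g1 (k + t) s) g23.
- have -> : alpha ^+ q = alpha ^+ (q - t.+1) * (alpha * alpha ^+ t).
    by rewrite -exprS -exprD subnK.
  have -> : (k + q = (k + t).+1 + (q - t.+1))%N.
    by rewrite -addnS -addnA subnKC.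
  apply: le_trans bEg3; rewrite -!mulrA; apply: ler_wpM2l.
    exact: exprn_ge0 (ltW alpha_gt0).
  exact: le_trans (ler_wpM2l (ltW alpha_gt0) bEg1) bE2.
- by exists t => //; rewrite g23 // /g2 /upd eqxx.
Qed.

Lemma window_local_visited v n : window_local n (fun k g => visited g k n v).
Proof.
by move=> k g g' gg' [t tn vS]; exists t; rewrite // gg' // leq_addr ltn_add2l.
Qed.

Lemma extendable_visited_seq (l : seq 'I_N) :
  extendable (size l * q) (alpha ^+ (size l * q))
    (fun k g => {in l, forall v, visited g k (size l * q) v}).
Proof.
elim: l => [|v l IH]; first exact: extendable_nil.
have := extendable_cat (exprn_gt0 q alpha_gt0)
  (exprn_ge0 (size l * q) (ltW alpha_gt0)) (@window_local_visited v q)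
  (extendable_visited v) IH.
rewrite -mulSn; apply: sub_extendable; first by rewrite -exprD addnC -mulSn.
move=> k g [[t tq vS] lS] u; rewrite inE => /predU1P[->|ul].
  by exists t => //; rewrite /= mulSn (leq_trans tq) ?leq_addr.
have [t' t'l uS] := lS u ul.
by exists (q + t')%N; rewrite /= ?mulSn ?ltn_add2l // addnA.
Qed.

Lemma extendable_covered_windows n :
  extendable (n * (N * q)) (alpha ^+ (n * (N * q)))
    (fun k g => forall j, (j < n)%N -> covered g (k + j * (N * q)) (N * q)).
Proof.
pose B := (N * q)%N.
have extB : extendable B (alpha ^+ B) (fun k g => covered g k B).
  have := extendable_visited_seq (enum 'I_N); rewrite size_enum_ord.
  by apply: sub_extendable => // k g all_v v; apply: all_v; rewrite mem_enum.
elim: n => [|n IH]; first exact: extendable_nil.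
have locB : window_local (n * B)
    (fun k g => forall j, (j < n)%N -> covered g (k + j * B) B).
  move=> k g g' gg' cov j jn v; have [t tB vS] := cov j jn v; exists t => //.
  rewrite gg' // -addnA leq_addr ltn_add2l (leq_trans (_ : _ < j * B + B)%N) //.
    by rewrite ltn_add2l.
  by rewrite -mulSnr leq_mul2r jn orbT.
have := extendable_cat (exprn_gt0 (n * B) alpha_gt0)
  (exprn_ge0 B (ltW alpha_gt0)) locB IH extB.
rewrite -mulSnr; apply: sub_extendable; first by rewrite -exprD addnC -mulSnr.
move=> k g [cov_n cov_last] j.
by rewrite ltnS leq_eqVlt => /predU1P[->|]; [apply: cov_last | apply: cov_n].
Qed.

Variables (A : 'M[R]_N) (a : R) (r : 'I_N).
Hypothesis A_ge0 : forall i j, 0 <= A i j.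
Hypothesis A_sum1 : forall i, \sum_(j < N) A i j = 1.
Hypothesis a_gt0 : 0 < a.
Hypothesis a_le_entry : forall i j, 0 < A i j -> a <= A i j.
Hypothesis A_rr : 0 < A r r.
Hypothesis r_root : is_root A r.

Let L := (N * (N * q))%N.

Lemma window_local_contracts n c :
  window_local n (fun k g => contracts A g k n c).
Proof. by move=> k g g' gg'; apply: eq_contracts. Qed.

Lemma extendable_contracts J : extendable (J * L) (alpha ^+ L ^+ J)
  (fun k g => contracts A g k (J * L) ((1 - a ^+ L) ^+ J)).
Proof.
have extW :
    extendable L (alpha ^+ L) (fun k g => contracts A g k L (1 - a ^+ L)).
  apply: sub_extendable (extendable_covered_windows N); first exact: lexx.
  move=> k g.
  exact: (covered_contracts A_ge0 A_sum1 a_gt0 a_le_entry A_rr r_root).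
elim: J => [|J IH].
  by apply: extendable_nil => k g x m D x_band; exists m; rewrite mul1r.
have aL_gt0 : 0 < alpha ^+ L := exprn_gt0 L alpha_gt0.
have := extendable_cat (exprn_gt0 J aL_gt0) (ltW aL_gt0)
  (@window_local_contracts _ _) IH extW.
rewrite -mulSnr -exprS; apply: sub_extendable; first exact: lexx.
by move=> k g [cJ cL]; rewrite mulSnr exprS; apply: contractsD cJ cL.
Qed.

Hypothesis N_gt0 : (0 < N)%N.
Hypothesis q_gt0 : (0 < q)%N.

Lemma exists_extendable_contraction (D eps : R) : 0 < eps -> exists n b c,
  [/\ (0 < n)%N, 0 < b, N%:R * (c * D) ^+ 2 < eps &
    extendable n b (fun k g => contracts A g k n c)].
Proof.
move=> eps_gt0; have aL_gt0 : 0 < a ^+ L := exprn_gt0 L a_gt0.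
have aL_le1 : a ^+ L <= 1.
  apply: exprn_ile1; first exact: ltW.
  exact: le_trans (a_le_entry A_rr) (entry_le1 A_ge0 A_sum1 r r).
have c01 : 0 <= 1 - a ^+ L < 1 by apply/andP; split; lra.
have [J J_gt0 small] := exists_pow_lt D c01 (ler0n _ N) eps_gt0.
exists (J * L)%N, (alpha ^+ L ^+ J), ((1 - a ^+ L) ^+ J); split => //.
- by rewrite !muln_gt0 J_gt0 N_gt0 q_gt0.
- by rewrite !exprn_gt0.
- exact: extendable_contracts.
Qed.

Lemma disagreement_event_le x1 m D eps n b c K : (0 < n)%N -> 0 < b ->
  in_band x1 m D -> N%:R * (c * D) ^+ 2 < eps ->
  extendable n b (fun k g => contracts A g k n c) ->
  pr [set w | eps <= disagreement (traj A sig x1 K.-1 w)] <=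
    (1 - b) ^+ (K.-1 %/ n).
Proof.
move=> n_gt0 b_gt0 x1_band small extQ; have locQ := @window_local_contracts n c.
have mS := measurable_traj P sig_measurable A x1 K.-1
  (fun x => eps <= disagreement x).
have mF := determined_measurable P sig_measurable
  (determined_fails_all (m := K.-1 %/ n) locQ).
apply: le_trans (le_pr P mS mF _)
  (fails_all_le sig_measurable _ b_gt0 extQ locQ).
move=> w /=; rewrite traj_evolve => eps_le j jK contr.
have jnK : (j.+1 * n <= K.-1)%N by rewrite -leq_divRL.
by have := disagreement_contracts A_ge0 A_sum1 N_gt0 x1_band contr jnK; lra.
Qed.

Lemma consensus_in_probability x1 eps : 0 < eps ->
  (fun K : nat => P [set w | eps <= disagreement (traj A sig x1 K.-1 w)])
    @ \oo --> 0%E.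
Proof.
move=> eps_gt0; have [m [D x1_band]] := exists_in_band x1.
have [n [b [c [n_gt0 b_gt0 small extQ]]]] :=
  exists_extendable_contraction D eps_gt0.
have b_le1 := extendable_le1 sig_measurable extQ.
have b01 : 0 <= 1 - b < 1 by apply/andP; split; lra.
have b_ge0 : 0 <= 1 - b by lra.
apply: cvg_EFin.
  near=> K; rewrite fin_num_measure //.
  exact: (measurable_traj P sig_measurable A x1 K.-1
    (fun x => eps <= disagreement x)).
apply/cvgrPdist_lt => e e_gt0.
have /cvgrPdist_lt/(_ e e_gt0) := cvg_expr_divn b01 n_gt0.
apply: filterS => K /=; rewrite !sub0r !normrN !ger0_norm ?pr_ge0 ?exprn_ge0 //.
exact: le_lt_trans (disagreement_event_le _ n_gt0 b_gt0 x1_band small extQ).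
Unshelve. all: by end_near.
Qed.

End Consensus.

Theorem corollary1 (R : realType) (N : nat) (A : 'M[R]_N)
  (d : measure_display) (T : measurableType d) (P : probability T R)
  (sig : nat -> T -> {set 'I_N}) :
  (0 < N)%N ->
  row_stochastic A ->
  (forall k s, measurable [set w | sig k w = s]) ->
  (* (a) *)
  (rooted A /\ exists r, is_root A r /\ 0 < A r r) ->
  (* (b) *)
  (exists alpha : R, 0 < alpha /\
     forall (k : nat) (h : nat -> {set 'I_N}) (s : {set 'I_N}), (0 < k)%N ->
       P (hist_event sig k h) != 0%E ->
       cprob P [set w | sig k w = s] (hist_event sig k h) != 0 ->
       alpha <= cprob P [set w | sig k w = s] (hist_event sig k h)) ->
  (* (c) *)
  (exists q : nat, (0 < q)%N /\
     forall (k : nat) (h : nat -> {set 'I_N}), (0 < k)%N ->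
       P (hist_event sig k h) != 0%E ->
       forall v : 'I_N, exists w : nat, (w < q)%N /\ exists s : {set 'I_N},
         v \in s /\ cprob P [set t | sig (k + w)%N t = s] (hist_event sig k h) != 0) ->
  (* consensus almost surely *)
  forall (eps : R) (x1 : 'cV[R]_N), 0 < eps ->
    (fun k : nat => P [set w | eps <= disagreement (traj A sig x1 k.-1 w)])
      @ \oo --> 0%E.
Proof.
move=> N_gt0 [A_ge0 A_sum1] sig_meas [_ [r [r_root A_rr]]]
  [alpha [alpha_gt0 cprob_ge]] [q [q_gt0 cprob_cover]] eps x1 eps_gt0.
have [a a_gt0 a_le_entry] := exists_min_pos_entry A.
exact: (consensus_in_probability sig_meas alpha_gt0 cprob_ge cprob_cover
  A_ge0 A_sum1 a_gt0 a_le_entry A_rr r_root N_gt0 q_gt0 x1 eps_gt0).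
Qed.
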